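(* Let $\{e^1,e^2,e^3,e^4\}$ be a basis of $\mathbb{R}^4$, let $a,b,c\in\mathbb{R}$ with $a\ne0$, set $\Delta=b^2-4ac$, and let $\Lambda=\langle e^{12}+e^{34},\ e^{13}+e^{42},\ ae^{14}+be^{42}+ce^{23}\rangle\subseteq\Lambda^2\mathbb{R}^4$. Then there exists a linear transformation $\theta$ of $\mathbb{R}^4$ (acting on $\Lambda^2\mathbb{R}^4$ in the induced way) such that: if $\Delta<0$, $\Lambda=\theta(\langle e^{12}+e^{34},\,e^{13}+e^{42},\,e^{14}+e^{23}\rangle)$; if $\Delta=0$, $\Lambda=\theta(\langle e^{12}+e^{34},\,e^{13},\,e^{14}+e^{23}\rangle)$; if $\Delta>0$, $\Lambda=\theta(\langle e^{12}+e^{34},\,e^{13},\,e^{24}\rangle)$.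
   Context: $e^{ij}$ abbreviates $e^i\wedge e^j$. *)

From HB Require Import structures.
From mathcomp Require Import all_boot all_order all_algebra.
From mathcomp Require Import reals.
Set Implicit Arguments. Unset Strict Implicit. Unset Printing Implicit Defensive.
Import Order.TTheory GRing.Theory Num.Theory.
Local Open Scope ring_scope.

(* Lambda^2 R^4 is modelled as skew-symmetric 4x4 real matrices:
   the 2-form sum_{i<j} w_ij e^i /\ e^j corresponds to the matrix with
   (i,j) entry w_ij and (j,i) entry -w_ij.  Vectors of R^4 are row
   vectors, e^i is the i-th standard row vector, and u /\ v corresponds
   to u^T v - v^T u. *)

(* e^{ij} with 1-based indices i, j in {1,2,3,4}, as in the paper. *)
Definition e2 (R : ringType) (i j : nat) : 'M[R]_4 :=
  delta_mx (@inord 3 i.-1) (@inord 3 j.-1) - delta_mx (@inord 3 j.-1) (@inord 3 i.-1).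

(* Induced action of theta (acting on row vectors v |-> v *m theta) on
   2-forms: theta(u /\ v) = (u theta) /\ (v theta) = theta^T (u^T v - v^T u) theta. *)
Definition act2 (R : ringType) (theta : 'M[R]_4) (w : 'M[R]_4) : 'M[R]_4 :=
  theta^T *m w *m theta.

Definition span3 (R : fieldType) (u v w : 'M[R]_4) : {vspace 'M[R]_4} :=
  <<[:: u; v; w]>>%VS.

From HB Require Import structures.
From mathcomp Require Import all_boot all_order all_algebra.
From mathcomp Require Import reals ring lra.
Set Implicit Arguments. Unset Strict Implicit. Unset Printing Implicit Defensive.
Import Order.TTheory GRing.Theory Num.Theory.
Local Open Scope ring_scope.

(* Prescribe theta by the images f^1, ..., f^4 of the basis vectors (its rows), so that
   theta(e^ij) = f^i /\ f^j.  In all three cases theta is block diagonal for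
   <e^1, e^2> + <e^3, e^4>: it maps e^12 + e^34 to a nonzero multiple of itself and the
   other two generators to an invertible combination of e^13 + e^42 and
   a e^14 + b e^42 + c e^23.  The entries of theta come from the roots of x^2 + b x + a c:
   -b/2 +- i k with k = sqrt(-Delta)/2, the double root -b/2, or (-b +- sqrt Delta)/2. *)

Lemma span_change3 (K : fieldType) (V : vectType K) (u v w : V) (x y z t s : K) :
  x != 0 -> y * s != z * t ->
  span [:: x *: u; y *: v + z *: w; t *: v + s *: w] = span [:: u; v; w].
Proof.
move=> x_neq0 /negPf det_neq0.
have d_neq0 : y * s - z * t != 0 by rewrite subr_eq0 det_neq0.
set U := span _; set W := span _.
have inW r : r \in [:: u; v; w] -> r \in W by move=> r_in; apply: memv_span.
have inU r : r \in [:: x *: u; y *: v + z *: w; t *: v + s *: w] -> r \in U.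
  by move=> r_in; apply: memv_span.
apply/eqP; rewrite eqEsubv; apply/andP; split;
  apply/span_subvP => r; rewrite !inE => /or3P[] /eqP ->.
- by rewrite memvZ ?inW ?mem_head.
- by rewrite memvD ?memvZ ?inW ?inE ?eqxx ?orbT.
- by rewrite memvD ?memvZ ?inW ?inE ?eqxx ?orbT.
- by rewrite -(scalerK x_neq0 u) memvZ ?inU ?mem_head.
- rewrite -[v](scalerK d_neq0).
  have -> : (y * s - z * t) *: v = s *: (y *: v + z *: w) - z *: (t *: v + s *: w).
    rewrite !scalerDr !scalerA opprD addrACA -!scalerBl.
    by rewrite [s * y]mulrC [s * z]mulrC subrr scale0r addr0.
  by rewrite memvZ // memvB // memvZ // inU // !inE eqxx ?orbT.
- rewrite -[w](scalerK d_neq0).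
  have -> : (y * s - z * t) *: w = y *: (t *: v + s *: w) - t *: (y *: v + z *: w).
    rewrite !scalerDr !scalerA opprD addrACA -!scalerBl.
    by rewrite [y * t]mulrC [t * z]mulrC subrr scale0r add0r.
  by rewrite memvZ // memvB // memvZ // inU // !inE eqxx ?orbT.
Qed.

Section TwoForms.
Variable R : comNzRingType.

Fact wedge_key : unit. Proof. by []. Qed.

(* Locked so that rewriting with [act2D] cannot see through [wedge] to a difference. *)
Definition wedge (u v : 'rV[R]_4) : 'M[R]_4 := locked_with wedge_key (u^T *m v - v^T *m u).

Lemma wedgeE u v : wedge u v = u^T *m v - v^T *m u.
Proof. by rewrite /wedge unlock. Qed.

Lemma wedge_entry u v i j : wedge u v i j = u 0 i * v 0 j - v 0 i * u 0 j.
Proof. by rewrite wedgeE !mxE !big_ord1 !mxE. Qed.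

Lemma e2_wedge i j :
  e2 R i j = wedge (delta_mx 0 (inord i.-1)) (delta_mx 0 (inord j.-1)).
Proof. by rewrite /e2 wedgeE !trmx_delta !mul_delta_mx. Qed.

Lemma act2D (theta u v : 'M[R]_4) : act2 theta (u + v) = act2 theta u + act2 theta v.
Proof. by rewrite /act2 mulmxDr mulmxDl. Qed.

Lemma act2_wedge (theta : 'M[R]_4) u v :
  act2 theta (wedge u v) = wedge (u *m theta) (v *m theta).
Proof. by rewrite /act2 !wedgeE mulmxBr mulmxBl !trmx_mul !mulmxA. Qed.

Definition vec4 (x1 x2 x3 x4 : R) : 'rV[R]_4 := \row_j [:: x1; x2; x3; x4]`_j.

Definition mx4 (f1 f2 f3 f4 : 'rV[R]_4) : 'M[R]_4 := \matrix_(i < 4) [:: f1; f2; f3; f4]`_i.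

Lemma delta_inord_row n k : (k <= n)%N ->
  delta_mx 0 (inord k) = \row_j (j == k :> nat)%:R :> 'rV[R]_n.+1.
Proof.
move=> le_kn; apply/rowP => j; rewrite !mxE eqxx /=.
suff -> : (j == inord k) = (j == k :> nat) by [].
by apply/idP/idP => /eqP j_k; apply/eqP;
  [rewrite j_k inordK | apply: val_inj; rewrite /= inordK].
Qed.

End TwoForms.

Lemma mx4_block_unitmx (K : fieldType) (p q r s p' q' r' s' : K) :
  p * s != q * r -> p' * s' != q' * r' ->
  mx4 (vec4 p q 0 0) (vec4 r s 0 0) (vec4 0 0 p' q') (vec4 0 0 r' s') \in unitmx.
Proof.
rewrite -subr_eq0 => d_neq0; rewrite -subr_eq0 => d'_neq0.
pose d := p * s - q * r; pose d' := p' * s' - q' * r'.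
suff /mulmx1_unit[] : mx4 (vec4 p q 0 0) (vec4 r s 0 0) (vec4 0 0 p' q') (vec4 0 0 r' s') *m
    mx4 (vec4 (s / d) (- q / d) 0 0) (vec4 (- r / d) (p / d) 0 0)
        (vec4 0 0 (s' / d') (- q' / d')) (vec4 0 0 (- r' / d') (p' / d')) = 1%:M by [].
apply/matrixP => - [[|[|[|[|?]]]] ?] // [[|[|[|[|?]]]] ?] //;
  by rewrite !mxE !big_ord_recr big_ord0 /= !mxE /= /d /d'; field.
Qed.

(* Reduces an identity between explicit 2-forms to its sixteen scalar entries. *)
Ltac solve_act2 R :=
  rewrite !(@e2_wedge R) ?act2D !act2_wedge -!rowE !rowK !inordK //=;
  rewrite !(@delta_inord_row R) //;
  apply/matrixP; intros i j; rewrite !mxE !wedge_entry !mxE; revert i j;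
  do 2 case=> [[|[|[|[|?]]]] ?] //=; field.

Section Pencil.
Variable R : rcfType.

Definition Lambda (a b c : R) : {vspace 'M[R]_4} :=
  span3 (e2 R 1 2 + e2 R 3 4) (e2 R 1 3 + e2 R 4 2)
        (a *: e2 R 1 4 + b *: e2 R 4 2 + c *: e2 R 2 3).

Lemma Lambda_disc_lt0 a b c : a != 0 -> b ^+ 2 - 4 * a * c < 0 ->
  exists2 theta : 'M[R]_4, theta \in unitmx &
    Lambda a b c = span3 (act2 theta (e2 R 1 2 + e2 R 3 4))
                         (act2 theta (e2 R 1 3 + e2 R 4 2))
                         (act2 theta (e2 R 1 4 + e2 R 2 3)).
Proof.
move=> a_neq0 disc_lt0.
pose k := Num.sqrt (4 * a * c - b ^+ 2) / 2.
have k_neq0 : k != 0.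
  by rewrite mulf_neq0 ?invr_eq0 ?pnatr_eq0 // gt_eqF // sqrtr_gt0 subr_gt0 -subr_lt0.
have c_def : c = (k ^+ 2 + b ^+ 2 / 4) / a.
  rewrite expr_div_n sqr_sqrtr; last by rewrite subr_ge0 -subr_le0 ltW.
  by field.
clearbody k.
exists (mx4 (vec4 a (- b / 2) 0 0) (vec4 0 k 0 0) (vec4 0 0 k 0) (vec4 0 0 (- b / 2) a)).
  by apply: mx4_block_unitmx; rewrite ?mulr0 ?mul0r mulf_neq0.
rewrite /Lambda /span3 c_def.
rewrite -(span_change3 _ _ _ (x := k * a) (y := k * a) (z := 0) (t := - (a * b / 2)) (s := a)).
- by congr span; congr [:: _; _; _]; solve_act2 R.
- by rewrite mulf_neq0.
- by rewrite mul0r !mulf_eq0 (negPf a_neq0) (negPf k_neq0).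
Qed.

Lemma Lambda_disc_eq0 a b c : a != 0 -> b ^+ 2 - 4 * a * c = 0 ->
  exists2 theta : 'M[R]_4, theta \in unitmx &
    Lambda a b c = span3 (act2 theta (e2 R 1 2 + e2 R 3 4)) (act2 theta (e2 R 1 3))
                         (act2 theta (e2 R 1 4 + e2 R 2 3)).
Proof.
move=> a_neq0 disc_eq0.
have c_def : c = b ^+ 2 / (4 * a).
  have -> : b ^+ 2 = 4 * a * c by apply/eqP; rewrite -subr_eq0 disc_eq0.
  by field.
exists (mx4 (vec4 (- a) (b / 2) 0 0) (vec4 0 1 0 0) (vec4 0 0 (- b / 2) a) (vec4 0 0 1 0)).
  by apply: mx4_block_unitmx; rewrite ?mulr0 ?mul0r ?mulr1 ?oppr_eq0 // eq_sym.
rewrite /Lambda /span3 c_def.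
rewrite -(span_change3 _ _ _ (x := - a) (y := a * b / 2) (z := - a) (t := - a) (s := 0)).
- by congr span; congr [:: _; _; _]; solve_act2 R.
- by rewrite oppr_eq0.
- by rewrite mulr0 mulrNN eq_sym mulf_neq0.
Qed.

Lemma Lambda_disc_gt0 a b c : a != 0 -> 0 < b ^+ 2 - 4 * a * c ->
  exists2 theta : 'M[R]_4, theta \in unitmx &
    Lambda a b c = span3 (act2 theta (e2 R 1 2 + e2 R 3 4)) (act2 theta (e2 R 1 3))
                         (act2 theta (e2 R 2 4)).
Proof.
move=> a_neq0 disc_gt0.
pose s := Num.sqrt (b ^+ 2 - 4 * a * c).
pose r1 := (- b + s) / 2; pose r2 := (- b - s) / 2.
have r12_neq : r1 != r2.
  have -> : r1 = r2 + s by rewrite /r1 /r2; field.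
  by rewrite -subr_eq0 addrC addKr gt_eqF // sqrtr_gt0.
have b_def : b = - (r1 + r2) by rewrite /r1 /r2; field.
have c_def : c = r1 * r2 / a.
  have -> : r1 * r2 = (b ^+ 2 - s ^+ 2) / 4 by rewrite /r1 /r2; field.
  by rewrite sqr_sqrtr ?ltW //; field.
clearbody r1 r2.
exists (mx4 (vec4 a r2 0 0) (vec4 a r1 0 0) (vec4 0 0 r1 a) (vec4 0 0 r2 a)).
  apply: mx4_block_unitmx.
  - by rewrite [r2 * a]mulrC (inj_eq (mulfI a_neq0)).
  - by rewrite [a * r2]mulrC (inj_eq (mulIf a_neq0)).
rewrite /Lambda /span3 c_def b_def.
rewrite -(span_change3 _ _ _ (x := a * (r1 - r2)) (y := a * r1) (z := a) (t := a * r2)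
                              (s := a)).
- by congr span; congr [:: _; _; _]; solve_act2 R.
- by rewrite mulf_neq0 // subr_eq0.
- by rewrite [a * r1 * a]mulrC !(inj_eq (mulfI a_neq0)).
Qed.
End Pencil.

Theorem lemma2p2 (R : realType) (a b c : R) (ha : a != 0) :
  let Delta := b ^+ 2 - 4 * a * c in
  let Lam := span3 (e2 R 1 2 + e2 R 3 4) (e2 R 1 3 + e2 R 4 2)
                   (a *: e2 R 1 4 + b *: e2 R 4 2 + c *: e2 R 2 3) in
  exists theta : 'M[R]_4, theta \in unitmx /\
    (Delta < 0 -> Lam = span3 (act2 theta (e2 R 1 2 + e2 R 3 4))
                              (act2 theta (e2 R 1 3 + e2 R 4 2))
                              (act2 theta (e2 R 1 4 + e2 R 2 3))) /\
    (Delta = 0 -> Lam = span3 (act2 theta (e2 R 1 2 + e2 R 3 4))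
                              (act2 theta (e2 R 1 3))
                              (act2 theta (e2 R 1 4 + e2 R 2 3))) /\
    (0 < Delta -> Lam = span3 (act2 theta (e2 R 1 2 + e2 R 3 4))
                              (act2 theta (e2 R 1 3))
                              (act2 theta (e2 R 2 4))).
Proof.
move=> Delta Lam.
case: (ltgtP Delta 0) => disc.
- have [theta theta_unit Lam_eq] := Lambda_disc_lt0 ha disc.
  by exists theta; split=> //; split=> //; split=> // D; exfalso; lra.
- have [theta theta_unit Lam_eq] := Lambda_disc_gt0 ha disc.
  by exists theta; split=> //; split=> //; split=> // D; exfalso; lra.
- have [theta theta_unit Lam_eq] := Lambda_disc_eq0 ha disc.
  by exists theta.
Qed.
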